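(* For all $\phi,\psi,\chi\in\mathcal{L}(\boxdot)$, the formula $\phi\to\boxdot((\boxdot\phi\wedge\boxdot(\phi\to\psi)\wedge\neg\boxdot\psi)\to\chi)$ is valid on the class of symmetric bimodal frames (both $R_1$ and $R_2$ symmetric).
   Context: Fix a nonempty set $\mathbf{P}$ of propositional variables. A bimodal model is $\langle S,R_1,R_2,V\rangle$ with $S$ nonempty, $R_1,R_2\subseteq S\times S$, $V:\mathbf{P}\to\mathcal{P}(S)$. $\mathcal{L}(\boxdot):\ \phi::=p\mid\neg\phi\mid(\phi\wedge\phi)\mid\boxdot\phi$. Truth: $\mathcal{M},s\vDash\boxdot\phi$ iff for all $t,u$ with $sR_1t$ and $sR_2u$, ($\mathcal{M},t\vDash\phi\iff\mathcal{M},u\vDash\phi$); atoms and Booleans as usual. Valid on a class of frames means true at every state of every model based on a frame of the class. *)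

Inductive form (P : Type) : Type :=
| Var : P -> form P
| Neg : form P -> form P
| And : form P -> form P -> form P
| Bdot : form P -> form P.

Arguments Var {P} _.
Arguments Neg {P} _.
Arguments And {P} _ _.
Arguments Bdot {P} _.

Definition Imp {P : Type} (a b : form P) : form P := Neg (And a (Neg b)).

Record frame := {
  st : Type;
  st_inhabited : inhabited st;
  R1 : st -> st -> Prop;
  R2 : st -> st -> Prop
}.

Fixpoint sat {P : Type} (F : frame) (V : P -> st F -> Prop) (s : st F)
  (phi : form P) : Prop :=
  match phi with
  | Var p => V p s
  | Neg a => ~ sat F V s a
  | And a b => sat F V s a /\ sat F V s b
  | Bdot a => forall t u, R1 F s t -> R2 F s u ->
                (sat F V t a <-> sat F V u a)
  end.

Definition symmetric_frame (F : frame) : Prop :=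
  (forall x y, R1 F x y -> R1 F y x) /\ (forall x y, R2 F x y -> R2 F y x).

Definition valid_on {P : Type} (C : frame -> Prop) (phi : form P) : Prop :=
  forall F : frame, C F -> forall (V : P -> st F -> Prop) (s : st F), sat F V s phi.

From Stdlib Require Import Classical.

(* Let s |= phi in a model on a symmetric frame, and let t be an
   R1- or R2-successor of s.  By symmetry t sees s again, so at t the state s
   witnesses phi among the successors of t.  If moreover t |= boxdot phi, the
   agreement demanded by boxdot propagates phi from s to every R1- and every
   R2-successor of t.  With phi true throughout those successors, the formulas
   phi -> psi and psi agree there, so t |= boxdot (phi -> psi) yields
   t |= boxdot psi.  Hence the antecedent
   boxdot phi /\ boxdot (phi -> psi) /\ ~ boxdot psi fails at every successor of
   s, the implication to chi holds at all of them, and an everywhere-true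
   formula trivially satisfies the boxdot condition at s. *)

Section BoxdotFacts.

Variable P : Type.
Variable F : frame.
Variable V : P -> st F -> Prop.

Notation "x |= a" := (sat F V x a) (at level 70).

Definition sees (t x : st F) : Prop := R1 F t x \/ R2 F t x.

Lemma sat_Imp_true (x : st F) (a b : form P) :
  x |= a -> (x |= Imp a b <-> x |= b).
Proof.
  intros Ha; simpl; split.
  - intros Hab; apply NNPP; intros Hnb; exact (Hab (conj Ha Hnb)).
  - intros Hb [_ Hnb]; exact (Hnb Hb).
Qed.

Lemma bdot_propagates (t x : st F) (phi : form P) :
  sees t x -> x |= phi -> t |= Bdot phi ->
  forall a b, R1 F t a -> R2 F t b -> a |= phi /\ b |= phi.
Proof.
  intros Hsees Hx Hbox a b Ha Hb.
  destruct Hsees as [Hx1 | Hx2].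
  - assert (Hphib : b |= phi) by exact (proj1 (Hbox x b Hx1 Hb) Hx).
    split; [exact (proj2 (Hbox a b Ha Hb) Hphib) | exact Hphib].
  - assert (Hphia : a |= phi) by exact (proj2 (Hbox a x Ha Hx2) Hx).
    split; [exact Hphia | exact (proj1 (Hbox a b Ha Hb) Hphia)].
Qed.

Lemma bdot_mp_uniform (t : st F) (phi psi : form P) :
  (forall a b, R1 F t a -> R2 F t b -> a |= phi /\ b |= phi) ->
  t |= Bdot (Imp phi psi) -> t |= Bdot psi.
Proof.
  intros Hphi Himp a b Ha Hb.
  destruct (Hphi a b Ha Hb) as [Hpa Hpb].
  rewrite <- (sat_Imp_true a phi psi Hpa), <- (sat_Imp_true b phi psi Hpb).
  exact (Himp a b Ha Hb).
Qed.

Lemma bdot_of_true_successors (s : st F) (chi : form P) :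
  (forall x, sees s x -> x |= chi) -> s |= Bdot chi.
Proof.
  intros Hall t u Ht Hu; split; intros _.
  - exact (Hall u (or_intror Hu)).
  - exact (Hall t (or_introl Ht)).
Qed.

Lemma antecedent_fails (t x : st F) (phi psi : form P) :
  sees t x -> x |= phi ->
  ~ t |= And (And (Bdot phi) (Bdot (Imp phi psi))) (Neg (Bdot psi)).
Proof.
  intros Hsees Hx [[Hbphi Hbimp] Hnbpsi].
  apply Hnbpsi, (bdot_mp_uniform t phi psi); [| exact Hbimp].
  exact (bdot_propagates t x phi Hsees Hx Hbphi).
Qed.

End BoxdotFacts.

Lemma sees_sym (F : frame) (s x : st F) :
  symmetric_frame F -> sees F s x -> sees F x s.
Proof.
  intros [S1 S2] [H1 | H2]; [left; exact (S1 _ _ H1) | right; exact (S2 _ _ H2)].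
Qed.

Theorem mainTheorem13 (P : Type) (HP : inhabited P) (phi psi chi : form P) :
  valid_on symmetric_frame
    (Imp phi (Bdot (Imp (And (And (Bdot phi) (Bdot (Imp phi psi))) (Neg (Bdot psi))) chi))).
Proof.
  intros F Hsym V s.
  set (ante := And (And (Bdot phi) (Bdot (Imp phi psi))) (Neg (Bdot psi))).
  assert (Hbox : sat F V s phi -> sat F V s (Bdot (Imp ante chi))).
  { intros Hphi; apply bdot_of_true_successors; intros x Hsx.
    assert (Hnante : ~ sat F V x ante)
      by exact (antecedent_fails P F V x s phi psi (sees_sym F s x Hsym Hsx) Hphi).
    simpl; intros [Hante _]; exact (Hnante Hante). }
  simpl; intros [Hphi Hnbox]; exact (Hnbox (Hbox Hphi)).
Qed.
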